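(* Let $L$, $\rho$ and the notions below be as in the context, let $\lambda_9\in\Lambda$ be a vector of norm $9$, and let $s=(\lambda_9;\theta,-1)$. Let $p$ be the point of $s^\perp$ nearest $\rho$, and let $B=\{x\in\mathbb{C}H^{13}:\mathrm{ht}_\rho(x)<\mathrm{ht}_\rho(p)\}$ be the open horoball centered at $\rho$ whose bounding horosphere is tangent to $s^\perp$ at $p$. Then there exist an open ball $U$ around $p$ with $U\cap\mathcal{H}=U\cap\mathcal{H}_p$, and a triflection $R$ in a Leech root, such that $B\cap R(B)\cap U\neq\emptyset$ and $R(B)\cap U\cap s^\perp\neq\emptyset$.
   Context: Let $\omega$ be a primitive cube root of unity, $\mathcal{E}=\mathbb{Z}[\omega]$, $\theta=\omega-\bar\omega=\sqrt{-3}$. Hermitian forms are linear in the first argument and antilinear in the second; $v^2=\langle v,v\rangle$. $\Lambda$ is the complex Leech lattice, an $\mathcal{E}$-lattice of rank 12 whose underlying real lattice is a scaled Leech lattice, scaled to have minimal norm $6$ (all inner products in $\theta\mathcal{E}$, $\Lambda=\theta\Lambda^*$). $L=\Lambda\oplus\mathcal{E}^2$, vectors $(x;y,z)$ with $x\in\Lambda$, $y,z\in\mathcal{E}$, and $\langle(x;y,z),(x';y',z')\rangle=\langle x,x'\rangle_\Lambda+\bar\theta y\bar z'+\theta z\bar y'$; signature $(13,1)$; $\mathbb{C}H^{13}$ is the set of negative-definite lines in $L\otimes_{\mathcal{E}}\mathbb{C}$ with its complex hyperbolic metric. A root is a vector of $L$ of norm $3$; $s^\perp$ is the corresponding hyperplane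 in $\mathbb{C}H^{13}$; $\mathcal{H}$ is the union of all such hyperplanes and $\mathcal{H}_p$ the union of those containing $p$. $\rho=(0;0,1)$. For $x\in\mathbb{C}H^{13}$ represented by $w$, $\mathrm{ht}_\rho(x)=-|\langle \rho,w\rangle|^2/w^2$. A Leech root is a root $l$ with $|\langle\rho,l\rangle|^2=3$. A triflection in a root $l$ is a map $x\mapsto x-(1-\zeta)\frac{\langle x,l\rangle}{3}l$ with $\zeta\in\{\omega,\bar\omega\}$. The point of $s^\perp$ nearest $\rho$ is the point represented by $\rho-\tfrac13\langle\rho,s\rangle s$ (the point of $s^\perp$ minimizing $\mathrm{ht}_\rho$). *)

From HB Require Import structures.
From mathcomp Require Import all_boot all_order all_algebra.
From mathcomp Require Import complex.
From mathcomp Require Import reals sequences exp.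
Set Implicit Arguments. Unset Strict Implicit. Unset Printing Implicit Defensive.
Import Order.TTheory GRing.Theory Num.Theory.
Local Open Scope ring_scope.
Local Open Scope complex_scope.

Section Defs.
Variable R : realType.
Local Notation C := (R[i]).

(* omega = exp(2 pi i/3), theta = omega - conj omega = sqrt(-3) *)
Definition omega : C := (- (1 / 2%:R)) +i* (Num.sqrt (3%:R : R) / 2%:R).
Definition theta : C := omega - omega^*.

Definition inE (z : C) : Prop := exists a b : int, z = a%:~R + b%:~R * omega.
Definition inEv n (v : 'rV[C]_n) : Prop := forall i, inE (v 0 i).

Definition herm n (G : 'M[C]_n) (x y : 'rV[C]_n) : C :=
  \sum_(i < n) \sum_(j < n) x 0 i * G i j * (y 0 j)^*.

(* G is the Gram matrix (w.r.t. an E-basis) of the complex Leech lattice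
   Lambda = E^12: hermitian, positive definite, all inner products in theta E,
   Lambda = theta Lambda^*, minimal norm 6. *)
Definition leech_dual (G : 'M[C]_12) (w : 'rV[C]_12) : Prop :=
  forall v, inEv v -> inE (herm G w v).

Definition is_complex_Leech_gram (G : 'M[C]_12) : Prop :=
  [/\ (forall i j, G j i = (G i j)^*),
      (forall x : 'rV[C]_12, x != 0 -> 0 < complex.Re (herm G x x)),
      (forall u v, inEv u -> inEv v -> exists e, inE e /\ herm G u v = theta * e),
      (forall w, leech_dual G w -> inEv (theta *: w)) /\
      (forall v, inEv v -> exists w, leech_dual G w /\ v = theta *: w)
    & (forall v, inEv v -> v != 0 -> 6%:R <= complex.Re (herm G v v)) /\
      (exists v, inEv v /\ herm G v v = 6%:R)].

(* vectors (x; y, z) of L (x) C = (Lambda (x) C) + C^2 *)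
Record Lvec := mkL { lx : 'rV[C]_12; ly : C; lz : C }.

Definition Ladd (u v : Lvec) := mkL (lx u + lx v) (ly u + ly v) (lz u + lz v).
Definition Lscale (c : C) (u : Lvec) := mkL (c *: lx u) (c * ly u) (c * lz u).
Definition Lsub (u v : Lvec) := Ladd u (Lscale (-1) v).

Definition Lform (G : 'M[C]_12) (u v : Lvec) : C :=
  herm G (lx u) (lx v) + theta^* * ly u * (lz v)^* + theta * lz u * (ly v)^*.

Definition inL (u : Lvec) : Prop := [/\ inEv (lx u), inE (ly u) & inE (lz u)].

Definition rho : Lvec := mkL 0 0 1.

Definition is_root G (r : Lvec) : Prop := inL r /\ Lform G r r = 3%:R.
Definition is_Leech_root G (l : Lvec) : Prop :=
  is_root G l /\ Lform G rho l * (Lform G rho l)^* = 3%:R.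

Definition triflection G (l : Lvec) (zeta : C) (x : Lvec) : Lvec :=
  Lsub x (Lscale ((1 - zeta) * Lform G x l / 3%:R) l).

(* a vector represents a point of CH^13 iff it has negative norm *)
Definition negv G (w : Lvec) : Prop := complex.Re (Lform G w w) < 0.

Definition ht G (w : Lvec) : R :=
  - complex.Re (Lform G rho w * (Lform G rho w)^*) / complex.Re (Lform G w w).

(* complex hyperbolic distance: cosh^2(d(x,y)/2) = |<x,y>|^2/(x^2 y^2) *)
Definition coshR (t : R) : R := (expR t + expR (- t)) / 2%:R.
Definition chball G (p : Lvec) (r : R) (x : Lvec) : Prop :=
  negv G x /\
  complex.Re (Lform G x p * Lform G p x) / (complex.Re (Lform G x x) * complex.Re (Lform G p p))
    < coshR (r / 2%:R) ^+ 2.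

Definition nearest_point G (s : Lvec) : Lvec :=
  Lsub rho (Lscale (Lform G rho s / 3%:R) s).

End Defs.

(* The point p = rho - s nearest rho on s^perp has norm -3 and height 3.  For x on the mirror of a
   root t, positivity of the form on x^perp gives cosh^2 (d(x, p)/2) >= 1 + |<p,t>|^2/9; as <p,t>
   lies in theta E, either it vanishes or this bound is >= 4/3 > cosh^2 (1/3), so the ball of radius
   2/3 around p meets only mirrors through p.  Everything else is an explicit computation in
   C lam9 + C^2 with the Leech root (0; 1, -omega). *)

From Pilot Require Import Defs.
From mathcomp Require Import all_boot all_order all_algebra.
From mathcomp Require Import complex.
From mathcomp Require Import reals sequences exp.
From mathcomp Require Import ring lra zify.
Import Order.TTheory GRing.Theory Num.Theory.

Set Implicit Arguments. Unset Strict Implicit. Unset Printing Implicit Defensive.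
Local Open Scope ring_scope.
Local Open Scope complex_scope.

Section Eisenstein.
Variable R : realType.
Local Notation C := (R[i]).

Definition sqrt3 : R := Num.sqrt 3%:R.

Lemma sqrt3_sqr : sqrt3 * sqrt3 = 3%:R.
Proof. by rewrite /sqrt3 -expr2 sqr_sqrtr // ler0n. Qed.

Definition eis (a b : R) : C := a%:C + b%:C * omega R.

Lemma eisE a b : eis a b = (a - b / 2%:R) +i* (b * sqrt3 / 2%:R).
Proof.
rewrite /eis /omega -/sqrt3 /=; simpc.
by apply/eqP; rewrite eq_complex /=; apply/andP; split; apply/eqP; ring.
Qed.

Local Ltac eis_ext := rewrite !eisE; simpc; apply/eqP; rewrite eq_complex /=;
  apply/andP; split; apply/eqP.

Lemma eisD a b c d : eis a b + eis c d = eis (a + c) (b + d).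
Proof. by eis_ext; field. Qed.

Lemma eisN a b : - eis a b = eis (- a) (- b).
Proof. by eis_ext; field. Qed.

Lemma eisM a b c d : eis a b * eis c d = eis (a * c - b * d) (a * d + b * c - b * d).
Proof.
eis_ext; last by field.
have -> : b * sqrt3 / 2%:R * (d * sqrt3 / 2%:R) = b * d * (sqrt3 * sqrt3) / 4%:R by field.
by rewrite sqrt3_sqr; field.
Qed.

Lemma eisJ a b : Num.conj (eis a b) = eis (a - b) (- b).
Proof. by rewrite -[Num.conj _]/(conjc _); eis_ext; field. Qed.

Lemma eisV a : (eis a 0)^-1 = eis a^-1 0.
Proof. by rewrite /eis !mul0r !addr0 fmorphV. Qed.

Lemma eis_nat n : (n%:R : C) = eis n%:R 0.
Proof. by rewrite /eis mul0r addr0 rmorph_nat. Qed.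

Lemma eis0 : (0 : C) = eis 0 0.
Proof. by rewrite /eis mul0r addr0. Qed.

Lemma eis1 : (1 : C) = eis 1 0.
Proof. by rewrite /eis mul0r addr0. Qed.

Lemma omega_eis : omega R = eis 0 1.
Proof. by rewrite /eis mul1r add0r. Qed.

Lemma theta_eis : theta R = eis 1 2%:R.
Proof. by rewrite /theta omega_eis eisJ eisN eisD; congr eis; ring. Qed.

Lemma Re_eis a b : complex.Re (eis a b) = a - b / 2%:R.
Proof. by rewrite eisE. Qed.

Lemma eis_int (a b : int) : eis a%:~R b%:~R = a%:~R + b%:~R * omega R.
Proof. by rewrite /eis !rmorph_int. Qed.

Lemma inE_eis (z : C) : Defs.inE z -> exists a b : int, z = eis a%:~R b%:~R.
Proof. by case=> a [b ->]; exists a, b; rewrite eis_int. Qed.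

End Eisenstein.

Ltac eis_norm := rewrite ?omega_eis ?theta_eis ?eis_nat ?eis0 ?eis1;
  do ![rewrite eisD|rewrite eisN|rewrite eisM|rewrite eisJ|rewrite eisV].

Lemma theta_conj (R : realType) : Num.conj (theta R) = - theta R.
Proof. by eis_norm; congr eis; ring. Qed.

Lemma theta_sqr (R : realType) : theta R * theta R = - 3%:R.
Proof. by eis_norm; congr eis; ring. Qed.

(* 4 (a^2 - ab + b^2) = (2a - b)^2 + 3 b^2 *)
Lemma eisenstein_norm_ge1 (a b : int) : (a != 0) || (b != 0) -> 1 <= a * a - a * b + b * b.
Proof. move=> /orP[] ?; nia. Qed.

Lemma Re_mul_conjl (R : realType) (a z : R[i]) :
  complex.Re (a * Num.conj a * z) = (complex.Re a ^+ 2 + complex.Im a ^+ 2) * complex.Re z.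
Proof. by case: a => a1 a2; case: z => z1 z2 /=; ring. Qed.

Section Sesquilinear.
Variables (R : realType) (n : nat) (G : 'M[R[i]]_n).

Lemma hermDl x y z : herm G (x + y) z = herm G x z + herm G y z.
Proof.
rewrite /herm -big_split; apply: eq_bigr => i _; rewrite -big_split.
by apply: eq_bigr => j _; rewrite mxE !mulrDl.
Qed.

Lemma hermZl c x z : herm G (c *: x) z = c * herm G x z.
Proof.
rewrite /herm mulr_sumr; apply: eq_bigr => i _; rewrite mulr_sumr.
by apply: eq_bigr => j _; rewrite mxE !mulrA.
Qed.

Lemma hermZr c x z : herm G x (c *: z) = Num.conj c * herm G x z.
Proof.
rewrite /herm mulr_sumr; apply: eq_bigr => i _; rewrite mulr_sumr.
by apply: eq_bigr => j _; rewrite mxE rmorphM /= mulrCA.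
Qed.

Lemma herm0l z : herm G 0 z = 0.
Proof. by rewrite -(scale0r 0) hermZl mul0r. Qed.

Lemma herm0r x : herm G x 0 = 0.
Proof. by rewrite -(scale0r 0) hermZr rmorph0 mul0r. Qed.

Lemma herm_conj : (forall i j, G j i = Num.conj (G i j)) ->
  forall x y, herm G y x = Num.conj (herm G x y).
Proof.
move=> hG x y; rewrite /herm rmorph_sum /= exchange_big /=; apply: eq_bigr => i _.
rewrite rmorph_sum /=; apply: eq_bigr => j _.
by rewrite !rmorphM /= conjCK hG; ring.
Qed.

End Sesquilinear.

Section LorentzianForm.
Variables (R : realType) (G : 'M[R[i]]_12).
Hypothesis G_herm : forall i j, G j i = Num.conj (G i j).
Hypothesis G_pos : forall x : 'rV[R[i]]_12, x != 0 -> 0 < complex.Re (herm G x x).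

Lemma LformDl u v w : Lform G (Ladd u v) w = Lform G u w + Lform G v w.
Proof. by rewrite /Lform /= hermDl; ring. Qed.

Lemma LformZl c u w : Lform G (Lscale c u) w = c * Lform G u w.
Proof. by rewrite /Lform /= hermZl; ring. Qed.

Lemma LformBl u v w : Lform G (Lsub u v) w = Lform G u w - Lform G v w.
Proof. by rewrite /Lsub LformDl LformZl mulN1r. Qed.

Lemma Lform_conj u v : Lform G v u = Num.conj (Lform G u v).
Proof.
rewrite /Lform theta_conj !rmorphD !rmorphM !rmorphN /= !conjCK theta_conj.
by rewrite (herm_conj G_herm); ring.
Qed.

Lemma LformZr c u w : Lform G w (Lscale c u) = Num.conj c * Lform G w u.
Proof. by rewrite Lform_conj LformZl rmorphM /= -!Lform_conj. Qed.

Lemma LformBr u v w : Lform G w (Lsub u v) = Lform G w u - Lform G w v.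
Proof. by rewrite Lform_conj LformBl rmorphB /= -!Lform_conj. Qed.

Lemma Lform_orthC u v : Lform G u v = 0 -> Lform G v u = 0.
Proof. by move=> h; rewrite Lform_conj h rmorph0. Qed.

Lemma herm_ge0 x : 0 <= complex.Re (herm G x x).
Proof. by have [->|/G_pos/ltW//] := eqVneq x 0; rewrite herm0l. Qed.

Definition nu : Lvec R := mkL 0 1 (theta R).

(* [nu] has norm -6 and [nu^perp = Lambda + C (0; 1, -theta)], where [(0; 1, -theta)] has norm 6. *)
Lemma Lform_nu_perp_ge0 v : Lform G v nu = 0 -> 0 <= complex.Re (Lform G v v).
Proof.
have theta_neq0 : theta R != 0.
  by apply/eqP => h; move: (theta_sqr R); rewrite h mul0r => /eqP; rewrite eq_sym oppr_eq0 pnatr_eq0.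
move=> /eqP v_perp.
have lz_v : lz v = - (theta R * ly v).
  apply/eqP; rewrite -addr_eq0; move: v_perp.
  rewrite /Lform /nu /= herm0r add0r rmorph1 mulr1 theta_conj.
  have -> : - theta R * ly v * - theta R + theta R * lz v = theta R * (lz v + theta R * ly v) by ring.
  by rewrite mulf_eq0 (negPf theta_neq0).
have -> : Lform G v v = herm G (lx v) (lx v) + 6%:R * (ly v * Num.conj (ly v)).
  rewrite /Lform lz_v !(rmorphN, rmorphM) /= theta_conj.
  transitivity (herm G (lx v) (lx v) - theta R * theta R * (ly v * Num.conj (ly v)) *+ 2); first ring.
  by rewrite theta_sqr; ring.
rewrite raddfD /= addr_ge0 ?herm_ge0 //.
by move: (mulr_ge0 (ler0n _ 6) (mul_conjC_ge0 (ly v))); rewrite lecE => /andP[].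
Qed.

Lemma Lform_ge0_of_orth_neg x u : complex.Re (Lform G x x) < 0 -> Lform G u x = 0 ->
  0 <= complex.Re (Lform G u u).
Proof.
move=> x_neg ux0; have xu0 := Lform_orthC ux0.
set a := Lform G x nu; set b := Lform G u nu.
have [a0|a_neq0] := eqVneq a 0; first by move: (Lform_nu_perp_ge0 a0); lra.
set v := Lsub (Lscale a u) (Lscale b x).
have v_perp : Lform G v nu = 0 by rewrite LformBl !LformZl -/a -/b; ring.
have := Lform_nu_perp_ge0 v_perp.
have -> : Lform G v v = a * Num.conj a * Lform G u u + b * Num.conj b * Lform G x x.
  by rewrite LformBl !LformBr !LformZl !LformZr ux0 xu0; ring.
rewrite raddfD /= !Re_mul_conjl.
have a_pos : 0 < complex.Re a ^+ 2 + complex.Im a ^+ 2.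
  rewrite lt_def addr_ge0 ?sqr_ge0 // andbT; apply: contra a_neq0 => /eqP sum0.
  by rewrite eq_complex; apply/andP; split; apply/eqP; nra.
have b_nneg : 0 <= complex.Re b ^+ 2 + complex.Im b ^+ 2 by rewrite addr_ge0 ?sqr_ge0.
nra.
Qed.

Lemma Lform_norm_real u : Lform G u u = (complex.Re (Lform G u u))%:C.
Proof.
have := Lform_conj u u; case: (Lform G u u) => a b /= [] /eqP.
by rewrite -subr_eq0 opprK -mulr2n mulrn_eq0 /= => /eqP ->.
Qed.

Lemma dist_ratio_ge_of_orth x t p : complex.Re (Lform G x x) < 0 -> Lform G x t = 0 ->
  Lform G t t = 3%:R -> Lform G p p = - 3%:R ->
  1 + complex.Re (Lform G p t * Lform G t p) / 9%:R <=
  complex.Re (Lform G x p * Lform G p x) /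
     (complex.Re (Lform G x x) * complex.Re (Lform G p p)).
Proof.
move=> x_neg xt0 tt3 pp3; have tx0 := Lform_orthC xt0.
rewrite pp3 (Lform_conj p x) (Lform_conj p t).
have xx_real := Lform_norm_real x.
set X := complex.Re _ in x_neg xx_real *; set c := Lform G p x; set d := Lform G p t.
have X_conj : Num.conj X%:C = X%:C := conjc_real X.
(* [u = 3 x^2 p - 3 <p,x> x - x^2 <p,t> t] is orthogonal to the negative vector [x]. *)
set u := Lsub (Lsub (Lscale (3%:R * X%:C) p) (Lscale (3%:R * c) x)) (Lscale (X%:C * d) t).
have ux0 : Lform G u x = 0 by rewrite !LformBl !LformZl tx0 xx_real -/c; ring.
have := Lform_ge0_of_orth_neg x_neg ux0.
have -> : Lform G u u = - (27%:R * X%:C ^+ 2 + 9%:R * X%:C * (c * Num.conj c) + 3%:R * X%:C ^+ 2 * (d * Num.conj d)).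
  rewrite !LformBl !LformBr !LformZl !LformZr !rmorphM /= X_conj !rmorph_nat pp3 tt3 xx_real tx0 xt0.
  by rewrite -/c -/d (Lform_conj p x) (Lform_conj p t) -/c -/d; ring.
clear u ux0; clearbody c d; case: c => c1 c2; case: d => d1 d2; rewrite -!complexr0; simpc => /= uu_ge0.
rewrite ler_pdivlMr; last lra.
nra.
Qed.
End LorentzianForm.

Lemma coshR_third_sqr_bounds (R : realType) :
  625%:R / 576%:R <= coshR (3%:R^-1 : R) ^+ 2 <= 81%:R / 64%:R.
Proof.
rewrite /coshR.
have u_ge := expR_ge1Dx (3%:R^-1 : R); have v_ge := expR_ge1Dx (- (3%:R^-1 : R)).
have uv1 : expR (3%:R^-1 : R) * expR (- 3%:R^-1) = 1.
  by rewrite expRN mulfV // gt_eqF // expR_gt0.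
set u := expR _ in u_ge uv1 *; set v := expR _ in v_ge uv1 *.
rewrite -div1r in u_ge v_ge.
have : 25%:R / 12%:R <= u + v by nra.
have : u <= 3%:R / 2%:R by nra.
have : v <= 3%:R / 4%:R by nra.
by move=> *; apply/andP; split; nra.
Qed.

Section Plane9.
Variables (R : realType) (G : 'M[R[i]]_12) (lam9 : 'rV[R[i]]_12).
Hypothesis lam9_norm : herm G lam9 lam9 = 9%:R.

(* Every vector used below lies in [C lam9 + C^2], where the form has Gram matrix diag(9) + hyperbolic plane. *)
Definition vec9 (a y z : R[i]) : Lvec R := mkL (a *: lam9) y z.

Lemma Lform_vec9 a y z a' y' z' : Lform G (vec9 a y z) (vec9 a' y' z') =
  9%:R * a * Num.conj a' + Num.conj (theta R) * y * Num.conj z' + theta R * z * Num.conj y'.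
Proof. by rewrite /Lform /= hermZl hermZr lam9_norm; ring. Qed.

Lemma Lscale_vec9 c a y z : Lscale c (vec9 a y z) = vec9 (c * a) (c * y) (c * z).
Proof. by rewrite /Lscale /vec9 /= scalerA. Qed.

Lemma Lsub_vec9 a y z a' y' z' :
  Lsub (vec9 a y z) (vec9 a' y' z') = vec9 (a + - 1 * a') (y + - 1 * y') (z + - 1 * z').
Proof. by rewrite /Lsub Lscale_vec9 /Ladd /vec9 /= scalerDl. Qed.

Lemma rho_vec9 : rho R = vec9 0 0 1.
Proof. by rewrite /rho /vec9 scale0r. Qed.

Lemma s_vec9 : mkL lam9 (theta R) (-1) = vec9 1 (theta R) (-1).
Proof. by rewrite /vec9 scale1r. Qed.

(* [p9 = rho - s] *)
Definition p9 := vec9 (eis (-1) 0) (eis (-1) (-2%:R)) (eis 2%:R 0).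

Lemma nearest_point_s : nearest_point G (mkL lam9 (theta R) (-1)) = p9.
Proof.
rewrite /nearest_point; have -> : Lform G (rho R) (mkL lam9 (theta R) (-1)) / 3%:R = eis 1 0.
  by rewrite s_vec9 rho_vec9 Lform_vec9; eis_norm; congr eis; field.
by rewrite s_vec9 rho_vec9 Lscale_vec9 Lsub_vec9; congr vec9; eis_norm; congr eis; ring.
Qed.

Lemma Lform_p9 : Lform G p9 p9 = - 3%:R.
Proof. by rewrite /p9 Lform_vec9; eis_norm; congr eis; ring. Qed.

Hypothesis G_theta : forall u v, inEv u -> inEv v -> exists e, Defs.inE e /\ herm G u v = theta R * e.
Hypothesis lam9_int : inEv lam9.

(* [<p9, t>] lies in [theta E], whose nonzero elements have norm at least 3. *)
Lemma Lform_p9_norm_ge3 t : inL t -> Lform G p9 t != 0 ->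
  3%:R <= complex.Re (Lform G p9 t * Num.conj (Lform G p9 t)).
Proof.
case=> tx_int /inE_eis[a2 [b2 ty]] /inE_eis[a3 [b3 tz]].
have [_ [/inE_eis [a1 [b1 ->]] lam9_t]] := G_theta lam9_int tx_int.
rewrite /p9 /Lform /= hermZl lam9_t ty tz.
set e1 : int := - a1 + a3 + b3 + a2 + a2 - b2 - b2.
set e2 : int := - b1 + a3 + a3 - b3 - b2 - b2.
have -> : eis (-1) 0 * (theta R * eis a1%:~R b1%:~R) +
    Num.conj (theta R) * eis (-1) (- 2%:R) * Num.conj (eis a3%:~R b3%:~R) +
    theta R * eis 2%:R 0 * Num.conj (eis a2%:~R b2%:~R) = theta R * eis e1%:~R e2%:~R.
  by rewrite /e1 /e2 !(intrD, intrN); eis_norm; congr eis; ring.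
clearbody e1 e2 => nz.
have : 1 <= e1 * e1 - e1 * e2 + e2 * e2.
  apply: eisenstein_norm_ge1; apply: contraNT nz; rewrite negb_or !negbK.
  by case/andP => /eqP -> /eqP ->; rewrite !mulr0z -eis0 mulr0.
rewrite -(ler1z R) !(intrD, intrN, intrM) => norm_ge1.
by eis_norm; rewrite Re_eis; lra.
Qed.

End Plane9.

Section TangencyPoint.
Variables (R : realType) (G : 'M[R[i]]_12) (lam9 : 'rV[R[i]]_12).
Hypothesis G_herm : forall i j, G j i = Num.conj (G i j).
Hypothesis G_pos : forall x : 'rV[R[i]]_12, x != 0 -> 0 < complex.Re (herm G x x).
Hypothesis G_theta : forall u v, inEv u -> inEv v -> exists e, Defs.inE e /\ herm G u v = theta R * e.
Hypothesis lam9_int : inEv lam9.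
Hypothesis lam9_norm : herm G lam9 lam9 = 9%:R.

Local Notation vec9 := (vec9 lam9).
Local Notation p9 := (p9 lam9).

Lemma Re_eis_eq (z : R[i]) a b c : z = eis a b -> a - b / 2%:R = c -> complex.Re z = c.
Proof. by move=> -> <-; rewrite Re_eis. Qed.

Local Ltac Re_compute := apply: Re_eis_eq;
  [rewrite ?(rho_vec9 lam9) ?(Lform_vec9 lam9_norm); eis_norm; reflexivity | by field].

Lemma ht_p9 : ht G p9 = 3%:R.
Proof.
rewrite /ht (Lform_p9 lam9_norm) (rho_vec9 lam9) (Lform_vec9 lam9_norm); eis_norm.
by rewrite !Re_eis; field.
Qed.

Lemma in_horoball3 w a b : complex.Re (Lform G (rho R) w * Num.conj (Lform G (rho R) w)) = a ->
  complex.Re (Lform G w w) = b -> b < 0 -> a < - 3%:R * b -> negv G w /\ ht G w < 3%:R.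
Proof.
rewrite /negv /ht => -> -> b_neg lt_ab; split => //.
by rewrite mulNr ltrNl ltr_ndivlMr //; lra.
Qed.

Lemma half_two_thirds : (2%:R / 3%:R : R) / 2%:R = 3%:R^-1.
Proof. by field. Qed.

Lemma in_ball_p9 w a b : complex.Re (Lform G w p9 * Lform G p9 w) = a ->
  complex.Re (Lform G w w) = b -> b < 0 -> a / (b * - 3%:R) < 625%:R / 576%:R ->
  chball G p9 (2%:R / 3%:R) w.
Proof.
rewrite /chball /negv (Lform_p9 lam9_norm) => -> -> b_neg le_ab; split => //.
have [lo _] := andP (coshR_third_sqr_bounds R).
have -> : complex.Re (- 3%:R : R[i]) = - 3%:R by rewrite raddfN /=; ring.
by rewrite half_two_thirds; lra.
Qed.

Lemma chball_p9_mirror x t : chball G p9 (2%:R / 3%:R) x -> is_root G t -> Lform G x t = 0 ->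
  Lform G p9 t = 0.
Proof.
move=> [x_neg x_close] [t_int t_norm] xt0; apply/eqP/negPn/negP => pt_neq0.
have := dist_ratio_ge_of_orth G_herm G_pos x_neg xt0 t_norm (Lform_p9 lam9_norm).
have := Lform_p9_norm_ge3 G_theta lam9_int t_int pt_neq0.
have [_ hi] := andP (coshR_third_sqr_bounds R).
rewrite half_two_thirds in x_close; rewrite -(Lform_conj G_herm); lra.
Qed.

Definition l0 := vec9 0 (eis 1 0) (eis 0 (-1)).

Lemma l0_Leech_root : is_Leech_root G l0.
Proof.
split; last by rewrite (rho_vec9 lam9) (Lform_vec9 lam9_norm); eis_norm; congr eis; ring.
split; last by rewrite (Lform_vec9 lam9_norm); eis_norm; congr eis; ring.
split=> [i||].
- by rewrite /= mxE mul0r; exists 0, 0; rewrite mul0r addr0.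
- by exists 1, 0; rewrite -eis_int.
- by exists 0, (-1); rewrite -eis_int intrN.
Qed.

(* [x1], [x2] lie in the horoball; their images [y1] (in the horoball) and [y2] (on [s^perp]) under
   the triflection in [l0] lie within 2/3 of [p9]. *)
Definition x1 := vec9 (eis (-4) 0) (eis 0 (-8)) (eis 9 (-4)).
Definition y1 := vec9 (eis (-4) 0) (eis (-5) (-9)) (eis 8 0).
Definition x2 := vec9 (eis (-13) 1) (eis (-1) (-26)) (eis 29 (-14)).
Definition y2 := vec9 (eis (-13) 1) (eis (-18) (-30)) (eis 25 (-1)).

Lemma triflection_l0_x1 : triflection G l0 (omega R) x1 = y1.
Proof.
rewrite /triflection; have -> : (1 - omega R) * Lform G x1 l0 / 3%:R = eis 5 1.
  by rewrite (Lform_vec9 lam9_norm); eis_norm; congr eis; field.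
by rewrite /l0 /x1 /x2 /y1 /y2 Lscale_vec9 Lsub_vec9; congr vec9; eis_norm; congr eis; ring.
Qed.

Lemma triflection_l0_x2 : triflection G l0 (omega R) x2 = y2.
Proof.
rewrite /triflection; have -> : (1 - omega R) * Lform G x2 l0 / 3%:R = eis 17 4.
  by rewrite (Lform_vec9 lam9_norm); eis_norm; congr eis; field.
by rewrite /l0 /x1 /x2 /y1 /y2 Lscale_vec9 Lsub_vec9; congr vec9; eis_norm; congr eis; ring.
Qed.

Lemma triflection_meets_horoball_near_p9 : exists y, [/\ negv G y /\ ht G y < 3%:R,
  chball G p9 (2%:R / 3%:R) y & exists x, (negv G x /\ ht G x < 3%:R) /\ y = triflection G l0 (omega R) x].
Proof.
exists y1; split; last (exists x1; split; last by rewrite triflection_l0_x1).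
- by apply: (in_horoball3 (a := 183) (b := -72)); [Re_compute | Re_compute | lra | lra].
- by apply: (in_ball_p9 (a := 228) (b := -72)); [Re_compute | Re_compute | lra | lra].
- by apply: (in_horoball3 (a := 192) (b := -72)); [Re_compute | Re_compute | lra | lra].
Qed.

Lemma triflection_meets_mirror_near_p9 : exists y, [/\ chball G p9 (2%:R / 3%:R) y,
  Lform G y (mkL lam9 (theta R) (-1)) = 0 &
  exists x, (negv G x /\ ht G x < 3%:R) /\ y = triflection G l0 (omega R) x].
Proof.
exists y2; split; last (exists x2; split; last by rewrite triflection_l0_x2).
- by apply: (in_ball_p9 (a := 2052) (b := -657)); [Re_compute | Re_compute | lra | lra].
- by rewrite s_vec9 (Lform_vec9 lam9_norm); eis_norm; congr eis; ring.
- by apply: (in_horoball3 (a := 1953) (b := -657)); [Re_compute | Re_compute | lra | lra].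
Qed.

End TangencyPoint.

Theorem lemma5p4 (R : realType) (G : 'M[R[i]]_12) (lam9 : 'rV[R[i]]_12) :
  is_complex_Leech_gram G ->
  inEv lam9 -> herm G lam9 lam9 = 9%:R ->
  let s := mkL lam9 (theta R) (-1) in
  let p := nearest_point G s in
  let inB := fun x => negv G x /\ ht G x < ht G p in
  exists r : R, 0 < r /\
    (forall x, chball G p r x ->
       (exists t, is_root G t /\ Lform G x t = 0) ->
       exists t, [/\ is_root G t, Lform G p t = 0 & Lform G x t = 0]) /\
    exists (l : Lvec R) (zeta : R[i]),
      [/\ is_Leech_root G l, zeta = omega R \/ zeta = (omega R)^*,
          (exists y, [/\ inB y, chball G p r y &
               exists x, inB x /\ y = triflection G l zeta x])
        & (exists y, [/\ chball G p r y, Lform G y s = 0 &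
               exists x, inB x /\ y = triflection G l zeta x])].
Proof.
move=> [G_herm G_pos G_theta _ _] lam9_int lam9_norm s p inB.
rewrite {}/inB {}/p (nearest_point_s lam9_norm) (ht_p9 lam9_norm).
exists (2%:R / 3%:R); split; first by rewrite divr_gt0 ?ltr0n.
split.
  move=> x x_near [t [t_root xt0]]; exists t; split=> //.
  exact: chball_p9_mirror x_near t_root xt0.
exists (l0 lam9), (omega R); split; first exact: l0_Leech_root.
- by left.
- exact: triflection_meets_horoball_near_p9.
- exact: triflection_meets_mirror_near_p9.
Qed.
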